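(* For all $n\geq 0$, $$s_n=\sum_{k=0}^{\lfloor n/2\rfloor}\binom{n-k}{n-2k}d_{n-2k},$$ where $s_n$ is the number of symmetric Schröder paths of length $2n$ and $d_j$ is the number of symmetric Dyck paths of length $2j$.
   Context: Steps: $U=(1,1)$, $D=(1,-1)$, $H=(2,0)$. A Dyck path of length $2n$ is a lattice path from $(0,0)$ to $(2n,0)$ with steps $U,D$ never going below the $x$-axis; a Schröder path of length $2n$ is a lattice path from $(0,0)$ to $(2n,0)$ with steps $U,D,H$ never going below the $x$-axis. A Dyck or Schröder path of length $2n$ is symmetric if it has a vertex with $x$-coordinate $n$ and it is invariant under reflection in the line $x=n$; equivalently, reversing its sequence of steps and interchanging $U$ and $D$ (keeping $H$) gives back the same sequence, and no $H$ step crosses the line $x=n$. $d_n$ = number of symmetric Dyck paths of length $2n$, $s_n$ = number of symmetric Schröder paths of length $2n$. *)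

From HB Require Import structures.
From mathcomp Require Import all_boot.
Set Implicit Arguments. Unset Strict Implicit. Unset Printing Implicit Defensive.

(* Steps U=(1,1), D=(1,-1), H=(2,0). *)
Inductive step := U | D | H.

Definition step_eqb (a b : step) : bool :=
  match a, b with U, U | D, D | H, H => true | _, _ => false end.
Lemma step_eqP : Equality.axiom step_eqb.
Proof. by case; case; constructor. Qed.
HB.instance Definition _ := hasDecEq.Build step step_eqP.

Definition swidth (s : step) : nat := if s is H then 2 else 1.
Definition width (p : seq step) : nat := sumn (map swidth p).

Fixpoint nonneg (h : nat) (p : seq step) : bool :=
  match p with
  | [::] => true
  | U :: q => nonneg h.+1 q
  | D :: q => (0 < h) && nonneg h.-1 q
  | H :: q => nonneg h q
  end.
Fixpoint final_height (h : nat) (p : seq step) : nat :=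
  match p with
  | [::] => h
  | U :: q => final_height h.+1 q
  | D :: q => final_height h.-1 q
  | H :: q => final_height h q
  end.

Definition schroder_path (n : nat) (p : seq step) : bool :=
  [&& width p == 2 * n, nonneg 0 p & final_height 0 p == 0].
Definition dyck_path (n : nat) (p : seq step) : bool :=
  schroder_path n p && (H \notin p).

Definition swapUD (s : step) : step :=
  match s with U => D | D => U | H => H end.

(* symmetric: has a vertex at x-coordinate n (some prefix has width n,
   so no H step crosses x = n) and reversing + swapping U/D gives p back. *)
Definition symmetric (n : nat) (p : seq step) : bool :=
  (map swapUD (rev p) == p) && has (fun k => width (take k p) == n) (iota 0 (size p).+1).

Fixpoint words (k : nat) : seq (seq step) :=
  match k with
  | 0 => [:: [::]]
  | k.+1 => flatten [seq [:: U :: w; D :: w; H :: w] | w <- words k]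
  end.

(* any path of width 2n has at most 2n steps *)
Definition all_words_upto (m : nat) : seq (seq step) :=
  flatten [seq words k | k <- iota 0 m.+1].

Definition d_num (n : nat) : nat :=
  count (fun p => dyck_path n p && symmetric n p) (all_words_upto (2 * n)).
Definition s_num (n : nat) : nat :=
  count (fun p => schroder_path n p && symmetric n p) (all_words_upto (2 * n)).

Example d_small : map d_num (iota 0 6) = [:: 1; 1; 2; 3; 6; 10]. Proof. by vm_compute. Qed.
Example s_small : map s_num (iota 0 5) = [:: 1; 1; 3; 5; 13]. Proof. by vm_compute. Qed.

From Pilot Require Import Defs.
From mathcomp Require Import all_boot zify.

Set Implicit Arguments.
Unset Strict Implicit.
Unset Printing Implicit Defensive.

(* A symmetric path of width 2n is determined by its left half, a word of
   width n that never goes below the axis, and every such word q is the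
   left half of exactly one symmetric path, namely q followed by its mirror
   image.  If the half has k level steps H, it has n - k steps, and deleting
   its H steps leaves a nonnegative U/D word of length n - 2k, i.e. the left
   half of a symmetric Dyck path of length 2(n - 2k); conversely the k steps
   H can be put back in 'C(n - k, k) = 'C(n - k, n - 2k) ways. *)

Definition mirror (q : seq step) : seq step := map swapUD (rev q).
Definition symmetrize (q : seq step) : seq step := q ++ mirror q.

Lemma swapUDK : involutive swapUD. Proof. by case. Qed.

Lemma mirrorK : involutive mirror.
Proof. by move=> q; rewrite /mirror -map_rev revK (mapK swapUDK). Qed.

Lemma mirror_cat a b : mirror (a ++ b) = mirror b ++ mirror a.
Proof. by rewrite /mirror rev_cat map_cat. Qed.

Lemma mirror_cons c q : mirror (c :: q) = mirror q ++ [:: swapUD c].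
Proof. by rewrite -cat1s mirror_cat. Qed.

Lemma mem_mirror c q : (c \in mirror q) = (swapUD c \in q).
Proof. by rewrite /mirror -{1}[c]swapUDK (mem_map (can_inj swapUDK)) mem_rev. Qed.

Lemma width_cat a b : width (a ++ b) = width a + width b.
Proof. by rewrite /width map_cat sumn_cat. Qed.

Lemma width_mirror q : width (mirror q) = width q.
Proof.
by rewrite /width /mirror -map_comp map_rev sumn_rev; congr sumn; apply: eq_map; case.
Qed.

Lemma width_size w : width w = size w + count_mem H w.
Proof.
by elim: w => [//|c w IH]; rewrite /width /= -/(width w) IH; case: c => /=; lia.
Qed.

Lemma size_le_width w : size w <= width w.
Proof. by rewrite width_size leq_addr. Qed.

Lemma nonneg_cat h a b :
  nonneg h (a ++ b) = nonneg h a && nonneg (final_height h a) b.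
Proof. by elim: a h => [//|c a IH] h; case: c => /=; rewrite IH // andbA. Qed.

Lemma final_height_cat h a b :
  final_height h (a ++ b) = final_height (final_height h a) b.
Proof. by elim: a h => [//|c a IH] h; case: c => /=. Qed.

Lemma nonneg_mirror h q : nonneg h q ->
  nonneg (final_height h q) (mirror q) &&
  (final_height (final_height h q) (mirror q) == h).
Proof.
elim: q h => [|c q IH] h /=; first by rewrite eqxx.
rewrite mirror_cons nonneg_cat final_height_cat.
case: c => /=.
- by move=> /IH /andP[-> /eqP ->] /=; rewrite eqxx.
- by move=> /andP[h_gt0 /IH /andP[-> /eqP ->]] /=; apply/eqP; lia.
- by move=> /IH /andP[-> /eqP ->] /=; rewrite eqxx.
Qed.

Lemma eq_cat_width a b c d : a ++ b = c ++ d -> width a = width c -> a = c.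
Proof.
elim: a c => [|x a IH] [|y c] //=.
- by rewrite /width /= => _; case: y => /=; lia.
- by rewrite /width /= => _; case: x => /=; lia.
- case=> -> e; rewrite /width /= => w; congr (_ :: _); apply: IH => //.
  by move: w; rewrite /width; lia.
Qed.

Lemma symmetrize_inj : injective symmetrize.
Proof.
move=> a b e; have size_ab : size a = size b.
  by have := congr1 size e; rewrite !size_cat !size_map !size_rev; lia.
by have := congr1 (take (size a)) e; rewrite take_size_cat // size_ab take_size_cat.
Qed.

Definition half_path (n : nat) (q : seq step) : bool :=
  (width q == n) && nonneg 0 q.

Definition sym_schroder (n : nat) (p : seq step) : bool :=
  schroder_path n p && Defs.symmetric n p.

Lemma symmetrize_sym_schroder n q :
  half_path n q -> sym_schroder n (symmetrize q).
Proof.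
case/andP=> /eqP wq nq; have /andP[nmq /eqP fmq] := nonneg_mirror nq.
rewrite /sym_schroder /schroder_path /Defs.symmetric /symmetrize.
rewrite width_cat width_mirror wq nonneg_cat nq nmq final_height_cat fmq eqxx.
rewrite -/(mirror _) mirror_cat mirrorK eqxx andbT.
apply/andP; split; first by apply/eqP; lia.
apply/hasP; exists (size q); first by rewrite mem_iota size_cat; lia.
by rewrite take_size_cat // wq.
Qed.

(* The vertex on the axis of symmetry splits p into its left half and, by
   the symmetry, the mirror image of that half. *)
Lemma sym_schroderP n p :
  sym_schroder n p -> exists2 q, half_path n q & p = symmetrize q.
Proof.
case/andP=> /and3P[/eqP wp np _] /andP[/eqP mp /hasP[k _ /eqP wk]].
have ep : p = take k p ++ drop k p by rewrite cat_take_drop.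
have wr : width (drop k p) = n by move: wp; rewrite {1}ep width_cat wk; lia.
have ep' : mirror (drop k p) ++ mirror (take k p) = take k p ++ drop k p.
  by rewrite -mirror_cat -ep.
have mr := eq_cat_width ep' (etrans (width_mirror _) (etrans wr (esym wk))).
exists (take k p); last by rewrite {1}ep /symmetrize -mr mirrorK.
by rewrite /half_path wk eqxx; move: np; rewrite {1}ep nonneg_cat => /andP[].
Qed.

Lemma count_words k (P : pred (seq step)) : count P (words k.+1) =
  count (fun w => P (U :: w)) (words k) + count (fun w => P (D :: w)) (words k)
  + count (fun w => P (H :: w)) (words k).
Proof.
by rewrite /= count_flatten; elim: (words k) => [//|w s IH] /=; rewrite IH; lia.
Qed.

Lemma count_mem_cons c y (s : seq (seq step)) :
  count (fun w => c :: w == y) s =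
  if y is c' :: x then (c == c') * count_mem x s else 0.
Proof.
elim: s => [|w s IH] /=; first by case: y => [|? ?]; rewrite ?muln0.
rewrite IH {IH}; case: y => [//|c' x]; rewrite eqseq_cons.
by case: (c == c') => /=; rewrite ?mul1n ?mul0n // eq_sym.
Qed.

Lemma count_mem_words k x : count_mem x (words k) = (size x == k).
Proof.
elim: k x => [|k IH] [|c x] //; rewrite count_words !count_mem_cons //.
by rewrite !IH eqSS; case: (size x == k); case: c.
Qed.

Lemma uniq_mem_of_count_mem (T : eqType) (s : seq T) (b : pred T) :
  (forall x, count_mem x s = b x) -> uniq s /\ s =i b.
Proof.
move=> cnt; have mem_s : s =i b.
  by move=> x; rewrite -has_pred1 has_count cnt unfold_in; case: (b x).
by split=> //; apply: count_mem_uniq => x; rewrite cnt mem_s.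
Qed.

Lemma words_uniq_mem k : uniq (words k) /\ words k =i [pred x | size x == k].
Proof. exact/uniq_mem_of_count_mem/count_mem_words. Qed.

Lemma count_all_words_upto m (P : pred (seq step)) :
  count P (all_words_upto m) = \sum_(0 <= k < m.+1) count P (words k).
Proof. by rewrite count_flatten sumnE !big_map /index_iota subn0. Qed.

Lemma all_words_upto_uniq_mem m :
  uniq (all_words_upto m) /\ all_words_upto m =i [pred x | size x <= m].
Proof.
apply: uniq_mem_of_count_mem => x.
rewrite count_flatten -map_comp (eq_map (fun k => count_mem_words k x)) sumn_count.
rewrite (eq_count (a2 := pred1 (size x))) => [|k]; last by rewrite /= eq_sym.
by rewrite count_uniq_mem ?iota_uniq ?mem_iota.
Qed.

Lemma eq_count_uniq (T : eqType) (P : pred T) (s1 s2 : seq T) :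
  uniq s1 -> uniq s2 -> {in P, s1 =i s2} -> count P s1 = count P s2.
Proof.
move=> uniq_s1 uniq_s2 eq_s; rewrite -!size_filter; apply: perm_size.
apply: uniq_perm; rewrite ?filter_uniq // => x; rewrite !mem_filter.
by case Px: (P x) => //=; apply: eq_s.
Qed.

Lemma count_all_words_upto_size m k (P : pred (seq step)) : k <= m ->
  (forall w, P w -> size w = k) -> count P (all_words_upto m) = count P (words k).
Proof.
move=> le_km size_P; have [uniq_up mem_up] := all_words_upto_uniq_mem m.
have [uniq_k mem_k] := words_uniq_mem k.
apply: eq_count_uniq => // w /size_P size_w.
by rewrite mem_up mem_k !inE size_w le_km eqxx.
Qed.

Lemma count_sym_schroder n (R : pred (seq step)) :
  count (fun p => sym_schroder n p && R p) (all_words_upto (2 * n)) =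
  count (fun q => half_path n q && R (symmetrize q)) (all_words_upto n).
Proof.
have [uniq_up2n mem_up2n] := all_words_upto_uniq_mem (2 * n).
have [uniq_upn mem_upn] := all_words_upto_uniq_mem n.
rewrite -!size_filter -[RHS](size_map symmetrize); apply: perm_size.
apply: uniq_perm; rewrite ?(map_inj_uniq symmetrize_inj) ?filter_uniq //.
move=> p; rewrite mem_filter mem_up2n inE; apply/andP/mapP.
- case=> /andP[/sym_schroderP[q hq ->] Rp] _; exists q => //.
  rewrite mem_filter mem_upn inE hq Rp /=.
  by case/andP: hq => /eqP <- _; apply: size_le_width.
- case=> q; rewrite mem_filter => /andP[/andP[hq Rq] _] ->.
  have sym_q := symmetrize_sym_schroder hq; split; first by rewrite sym_q.
  by case/andP: sym_q => /and3P[/eqP <- _ _] _; apply: size_le_width.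
Qed.

Definition dropH (w : seq step) : seq step := filter (predC1 H) w.

Definition count_UD (m : nat) (P : pred (seq step)) : nat :=
  count (fun w => (H \notin w) && P w) (words m).

Definition count_H_words (L k : nat) (P : pred (seq step)) : nat :=
  count (fun w => (count_mem H w == k) && P (dropH w)) (words L).

Lemma count_UD_S m P :
  count_UD m.+1 P =
  count_UD m (fun w => P (U :: w)) + count_UD m (fun w => P (D :: w)).
Proof.
rewrite /count_UD count_words -[RHS]addn0; congr (_ + _ + _).
by rewrite (eq_count (a2 := pred0)) ?count_pred0 // => w; rewrite in_cons eqxx.
Qed.

Lemma count_H_words0 L P : count_H_words L 0 P = count_UD L P.
Proof.
apply: eq_count => w; rewrite eqn0Ngt -has_count has_pred1.
case: (boolP (H \in w)) => //= notHw.
by rewrite /dropH (all_filterP _) // all_predC has_pred1.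
Qed.

Lemma count_H_words_SS L k P : count_H_words L.+1 k.+1 P =
  count_H_words L k.+1 (fun w => P (U :: w)) +
  count_H_words L k.+1 (fun w => P (D :: w)) + count_H_words L k P.
Proof. by rewrite /count_H_words count_words. Qed.

Lemma count_H_words_binomial L k P :
  count_H_words L k P = 'C(L, k) * count_UD (L - k) P.
Proof.
elim: L k P => [|L IH] [|k] P; rewrite ?count_H_words0 ?bin0 ?subn0 ?mul1n //.
rewrite count_H_words_SS !IH binS subSS.
have [k_lt_L | L_le_k] := ltnP k L; last by rewrite (@bin_small L k.+1) ?mul0n.
by rewrite (_ : L - k = (L - k.+1).+1) ?count_UD_S; nia.
Qed.

Lemma nonneg_dropH h w : nonneg h (dropH w) = nonneg h w.
Proof. by elim: w h => [//|c w IH] h; case: c => /=; rewrite -?IH. Qed.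

Lemma mem_symmetrize_H q : (H \in symmetrize q) = (H \in q).
Proof. by rewrite mem_cat mem_mirror orbb. Qed.

Lemma d_num_count_UD m : d_num m = count_UD m (nonneg 0).
Proof.
rewrite /d_num (eq_count (a2 := fun p => sym_schroder m p && (H \notin p))); last first.
  move=> p; rewrite /dyck_path /sym_schroder.
  by case: (H \in p); rewrite ?andbT ?andbF.
rewrite count_sym_schroder (count_all_words_upto_size (k := m)) // => [|q]; last first.
  case/andP=> /andP[/eqP wq _]; rewrite mem_symmetrize_H => /count_memPn noHq.
  by move: wq; rewrite width_size noHq addn0.
apply: eq_in_count => q; have [_ ->] := words_uniq_mem m; rewrite inE => /eqP sq.
rewrite /half_path mem_symmetrize_H width_size sq.
case: (boolP (H \in q)) => [_ | /count_memPn ->] /=; first by rewrite andbF.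
by rewrite andbT addn0 eqxx.
Qed.

Lemma s_num_sum n :
  s_num n = \sum_(0 <= L < n.+1) 'C(L, n - L) * d_num (L - (n - L)).
Proof.
rewrite /s_num (eq_count (a2 := fun p => sym_schroder n p && true)); last first.
  by move=> p; rewrite andbT.
rewrite count_sym_schroder count_all_words_upto.
apply: eq_big_nat => L /andP[_ le_Ln].
rewrite d_num_count_UD -count_H_words_binomial.
apply: eq_in_count => w; have [_ ->] := words_uniq_mem L; rewrite inE => /eqP sw.
rewrite andbT /half_path width_size sw nonneg_dropH; congr (_ && _).
by apply/eqP/eqP; lia.
Qed.

Theorem theorem3p3 (n : nat) :
  s_num n = \sum_(0 <= k < (n./2).+1) 'C(n - k, n - 2 * k) * d_num (n - 2 * k).
Proof.
have reindex : s_num n = \sum_(0 <= k < n.+1) 'C(n - k, k) * d_num (n - 2 * k).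
  rewrite s_num_sum big_nat_rev; apply: eq_big_nat => k /andP[_ lt_kn].
  have -> : 0 + n.+1 - k.+1 = n - k by lia.
  have -> : n - (n - k) = k by lia.
  by have -> : n - k - k = n - 2 * k by lia.
have tail_vanishes :
    \sum_((n./2).+1 <= k < n.+1) 'C(n - k, k) * d_num (n - 2 * k) = 0.
  rewrite big_nat big1 // => k /andP[lt_half _].
  by rewrite bin_small ?mul0n //; lia.
have half_le_n : (n./2).+1 <= n.+1 by lia.
rewrite reindex (@big_cat_nat _ _ _ (n./2).+1) //= tail_vanishes addn0.
apply: eq_big_nat => k /andP[_ le_k_half].
have k_le_nk : k <= n - k by lia.
by rewrite -(bin_sub k_le_nk); have -> : n - k - k = n - 2 * k by lia.
Qed.
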